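(* Let $\Theta$ be a causal theory over $\mathfrak L$, let $\Gamma\subseteq\mathfrak L$ be a set of non-modal formulas and $p\in\mathcal L_\Box$, and suppose $\Gamma\vdash_\Box\Box p$ is derivable in $\mathbf S_\Theta$. Then there are a finite set $\Gamma'\subseteq\Gamma$ and non-modal formulas $a,b\in\mathfrak L$ such that $\Gamma'\vdash a$ (classically), and $a\vdash_\Box\Box b$ and $b\vdash_\Box p$ are derivable in $\mathbf S_\Theta$.
   Context: $\mathfrak L$ is a classical propositional language with classical consequence $\vdash$. A causal rule is $\phi\triangleright\psi$ with $\phi,\psi\in\mathfrak L$; a causal theory $\Theta$ is a set of causal rules. $\mathcal L_\Box$ is generated by $\mathfrak L$ and a unary $\Box$. The sequent calculus $\mathbf S_\Theta$ derives sequents $\Gamma\vdash_\Box\Delta$ (collections of $\mathcal L_\Box$-formulas, possibly infinite; derivations well-founded, possibly infinitely branching) via: axiom $p\vdash_\Box p$; $\perp\vdash_\Box$; $\vdash_\Box\top$; weakening and contraction on both sides; classical two-sided LK rules for $\neg,\wedge,\vee,\to$ with shared contexts; $\Box$R: if $\phi_1\triangleright\psi_1,\dots,\phi_k\triangleright\psi_k\in\Theta$ and $\psi_1,\dots,\psi_k\vdash_\Box p$ is derivable, from $\Gamma\vdash_\Box\phi_1\wedge\dots\wedge\phi_k,\Delta$ infer $\Gamma\vdash_\Box\Box p,\Delta$; $\Box$L: letting $\{S_j\}_{j\in J}$ be all finite $S_j\subseteq\Theta$ with $\{\psi:\phi\triangleright\psi\in S_j\}\vdash_\Box p$ derivable,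 from $\Gamma,\{\phi:\phi\triangleright\psi\in S_j\}\vdash_\Box\Delta$ for all $j\in J$ infer $\Gamma,\Box p\vdash_\Box\Delta$; multicut: from $\Gamma\vdash_\Box p^m,\Delta$ and $\Gamma',p^n\vdash_\Box\Delta'$ ($m,n>0$) infer $\Gamma,\Gamma'\vdash_\Box\Delta,\Delta'$. *)

From Stdlib Require Import List.
Import ListNotations.
Set Implicit Arguments.

Inductive fm (A : Type) : Type :=
| FVar : A -> fm A
| FBot : fm A
| FTop : fm A
| FNeg : fm A -> fm A
| FAnd : fm A -> fm A -> fm A
| FOr  : fm A -> fm A -> fm A
| FImp : fm A -> fm A -> fm A.
Arguments FBot {A}. Arguments FTop {A}.

Inductive bfm (A : Type) : Type :=
| BVar : A -> bfm A
| BBot : bfm A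
| BTop : bfm A
| BNeg : bfm A -> bfm A
| BAnd : bfm A -> bfm A -> bfm A
| BOr  : bfm A -> bfm A -> bfm A
| BImp : bfm A -> bfm A -> bfm A
| Box  : bfm A -> bfm A.
Arguments BBot {A}. Arguments BTop {A}.

Fixpoint emb {A} (f : fm A) : bfm A :=
  match f with
  | FVar a => BVar a
  | FBot => BBot
  | FTop => BTop
  | FNeg g => BNeg (emb g)
  | FAnd g h => BAnd (emb g) (emb h)
  | FOr g h => BOr (emb g) (emb h)
  | FImp g h => BImp (emb g) (emb h)
  end.

Fixpoint eval {A} (v : A -> Prop) (f : fm A) : Prop :=
  match f with
  | FVar a => v a
  | FBot => False
  | FTop => True
  | FNeg g => ~ eval v g
  | FAnd g h => eval v g /\ eval v h
  | FOr g h => eval v g \/ eval v h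
  | FImp g h => eval v g -> eval v h
  end.

Definition cl_conseq {A} (G : list (fm A)) (a : fm A) : Prop :=
  forall v : A -> Prop, (forall g, In g G -> eval v g) -> eval v a.

(* Causal theory: a set of causal rules phi |> psi *)
Definition causal_theory (A : Type) := fm A -> fm A -> Prop.

(* Sequent sides: (possibly infinite) sets of L_Box formulas *)
Definition fset (A : Type) := bfm A -> Prop.
Definition sempty {A} : fset A := fun _ => False.
Definition sing {A} (f : bfm A) : fset A := fun g => g = f.
Definition add {A} (X : fset A) (f : bfm A) : fset A := fun g => X g \/ g = f.
Definition sunion {A} (X Y : fset A) : fset A := fun g => X g \/ Y g.
Definition subset {A} (X Y : fset A) : Prop := forall g, X g -> Y g.
Definition of_list {A} (l : list (fm A)) : fset A := fun g => exists f, In f l /\ g = emb f.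
Definition emb_set {A} (G : fm A -> Prop) : fset A := fun g => exists f, G f /\ g = emb f.

Fixpoint bigand {A} (l : list (fm A)) : fm A :=
  match l with
  | [] => FTop
  | [f] => f
  | f :: r => FAnd f (bigand r)
  end.

Definition in_theory {A} (Th : causal_theory A) (l : list (fm A * fm A)) : Prop :=
  forall r, In r l -> Th (fst r) (snd r).

(* The calculus S_Theta, relative to an oracle R deciding the side conditions
   "psi_1,...,psi_k |-_Box p is derivable" of the Box rules.  The actual
   S_Theta is obtained by requiring R to be derivability itself (S_fixpoint). *)
Inductive Der {A} (Th : causal_theory A) (R : fset A -> fset A -> Prop)
  : fset A -> fset A -> Prop :=
| D_ax : forall p, Der Th R (sing p) (sing p)
| D_bot : Der Th R (sing BBot) sempty
| D_top : Der Th R sempty (sing BTop)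
| D_weak : forall G D G' D', Der Th R G D -> subset G G' -> subset D D' -> Der Th R G' D'
| D_negL : forall G D f, Der Th R G (add D f) -> Der Th R (add G (BNeg f)) D
| D_negR : forall G D f, Der Th R (add G f) D -> Der Th R G (add D (BNeg f))
| D_andL : forall G D f g, Der Th R (add (add G f) g) D -> Der Th R (add G (BAnd f g)) D
| D_andR : forall G D f g, Der Th R G (add D f) -> Der Th R G (add D g) ->
    Der Th R G (add D (BAnd f g))
| D_orL : forall G D f g, Der Th R (add G f) D -> Der Th R (add G g) D ->
    Der Th R (add G (BOr f g)) D
| D_orR : forall G D f g, Der Th R G (add (add D f) g) -> Der Th R G (add D (BOr f g))
| D_impL : forall G D f g, Der Th R G (add D f) -> Der Th R (add G g) D ->
    Der Th R (add G (BImp f g)) D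
| D_impR : forall G D f g, Der Th R (add G f) (add D g) -> Der Th R G (add D (BImp f g))
| D_boxR : forall G D (l : list (fm A * fm A)) p,
    in_theory Th l ->
    R (of_list (map snd l)) (sing p) ->
    Der Th R G (add D (emb (bigand (map fst l)))) ->
    Der Th R G (add D (Box p))
| D_boxL : forall G D p,
    (forall l : list (fm A * fm A), in_theory Th l ->
       R (of_list (map snd l)) (sing p) ->
       Der Th R (sunion G (of_list (map fst l))) D) ->
    Der Th R (add G (Box p)) D
| D_cut : forall G D G' D' p,
    Der Th R G (add D p) -> Der Th R (add G' p) D' ->
    Der Th R (sunion G G') (sunion D D').

Definition S_fixpoint {A} (Th : causal_theory A) (R : fset A -> fset A -> Prop) : Prop :=
  forall G D, R G D <-> Der Th R G D.

From Stdlib Require Import List Classical.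
Import ListNotations.
Set Implicit Arguments.

(* The proof is semantic.  Worlds are arbitrary sets of non-modal formulas,
   a world "derives" what a finite part of it classically entails, and the
   modal language is interpreted by a Beth-style forcing relation over the
   consistent worlds: connectives are read classically through density, and
   Box q is forced when densely some finite rule set of Theta qualifying for
   q (its effects prove q) has all its causes derived.  Every rule of S_Theta
   is sound for this forcing, for any side-condition oracle R.

   Hence a consistent Gamma proving Box p forces Box p; adding to Gamma the
   negations of the causes of all qualifying rule sets must then be
   inconsistent, so a finite part Gamma' of Gamma entails the disjunction a
   of the causes of finitely many qualifying rule sets.  Taking b to be the
   disjunction of their effects, a |- Box b and b |- p are derived directly
   with the Box rules, using that R is derivability itself.  An inconsistent
   Gamma is handled with a = b = F. *)

Lemma list_in_union (X Y : Type) (P : X -> Prop) (Q : Y -> Prop) (f : Y -> X)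
  (L : list X) :
  (forall x, In x L -> P x \/ exists y, Q y /\ x = f y) ->
  exists L0 ys, (forall x, In x L0 -> P x) /\ (forall y, In y ys -> Q y) /\
    forall x, In x L -> In x L0 \/ exists y, In y ys /\ x = f y.
Proof.
  induction L as [|x L IH]; intros HL.
  - exists [], []; repeat split; intros _ [].
  - destruct IH as [L0 [ys [HP [HQ Hsplit]]]]; [intros; apply HL; right; auto|].
    destruct (HL x (or_introl eq_refl)) as [Hx|[y [Hy ->]]].
    + exists (x :: L0), ys; repeat split; auto.
      * intros z [<-|Hz]; auto.
      * intros z [<-|Hz]; [left; left; auto|].
        destruct (Hsplit z Hz) as [H|H]; [left; right|right]; auto.
    + exists L0, (y :: ys); repeat split; auto.
      * intros z [<-|Hz]; auto.
      * intros z [<-|Hz]; [right; exists y; split; [left|]; auto|].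
        destruct (Hsplit z Hz) as [H|[y' [Hy' ->]]]; [left; auto|].
        right; exists y'; split; [right|]; auto.
Qed.

Fixpoint bigor {A} (l : list (fm A)) : fm A :=
  match l with [] => FBot | x :: r => FOr x (bigor r) end.

Lemma eval_bigor {A} (v : A -> Prop) (l : list (fm A)) x :
  In x l -> eval v x -> eval v (bigor l).
Proof. induction l as [|y l IH]; simpl; [tauto|]. intros [<-|H] Hx; [left|right]; auto. Qed.

Lemma eval_bigand {A} (v : A -> Prop) (l : list (fm A)) :
  eval v (bigand l) -> forall x, In x l -> eval v x.
Proof.
  induction l as [|y [|z l] IH]; simpl in *; [tauto| |].
  - intros H x [<-|[]]; auto.
  - intros [H1 H2] x [<-|Hx]; auto.
Qed.

Section Worlds.

Variable A : Type.

(* Finiteness is built in, so no compactness theorem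
   is ever needed. *)
Definition world := fm A -> Prop.
Definition extends (S S' : world) : Prop := forall x, S x -> S' x.
Definition extend (S : world) (c : fm A) : world := fun x => S x \/ x = c.
Definition derives (S : world) (a : fm A) : Prop :=
  exists L, (forall x, In x L -> S x) /\ cl_conseq L a.
Definition consistent (S : world) : Prop := ~ derives S FBot.

Definition dense (P : world -> Prop) (S : world) : Prop :=
  forall S', consistent S' -> extends S S' ->
    exists S'', consistent S'' /\ extends S' S'' /\ P S''.

Lemma extends_refl S : extends S S.
Proof. intros x; auto. Qed.

Lemma extends_trans S1 S2 S3 : extends S1 S2 -> extends S2 S3 -> extends S1 S3.
Proof. intros H1 H2 x Hx; auto. Qed.

Lemma extends_extend S c : extends S (extend S c).
Proof. intros x Hx; left; auto. Qed.

Lemma derives_mono S S' a : extends S S' -> derives S a -> derives S' a.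
Proof. intros HS [L [HL Ha]]; exists L; split; auto. Qed.

Lemma derives_member S a : S a -> derives S a.
Proof.
  intros Ha; exists [a]; split; [intros x [<-|[]]; auto|].
  intros v Hv; apply Hv; left; auto.
Qed.

Lemma derives_weaken S a b :
  (forall v, eval v a -> eval v b) -> derives S a -> derives S b.
Proof. intros Hab [L [HL Ha]]; exists L; split; auto. intros v Hv; apply Hab, Ha, Hv. Qed.

Lemma derives_combine S a b c :
  (forall v, eval v a -> eval v b -> eval v c) -> derives S a -> derives S b -> derives S c.
Proof.
  intros Habc [L [HL Ha]] [L' [HL' Hb]]; exists (L ++ L'); split.
  - intros x Hx; apply in_app_or in Hx as [Hx|Hx]; auto.
  - intros v Hv; apply Habc; [apply Ha|apply Hb]; intros g Hg; apply Hv, in_or_app; auto.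
Qed.

Lemma derives_deduction S c b : derives (extend S c) b -> derives S (FImp c b).
Proof.
  intros [L [HL Hb]].
  destruct (@list_in_union _ _ S (fun y => y = c) (fun y => y) L)
    as [L0 [cs [HL0 [Hcs Hsplit]]]].
  { intros x Hx; destruct (HL x Hx) as [H|H]; [left; auto|right; exists x; auto]. }
  exists L0; split; auto. intros v Hv Hc; apply Hb.
  intros x Hx; destruct (Hsplit x Hx) as [H|[y [Hy ->]]]; [apply Hv; auto|].
  rewrite (Hcs y Hy); exact Hc.
Qed.

Lemma consistent_extend S c : ~ derives S (FNeg c) -> consistent (extend S c).
Proof.
  intros Hnc Hbot; apply Hnc. apply derives_deduction in Hbot.
  revert Hbot; apply derives_weaken; simpl; auto.
Qed.

Lemma consistent_extend_neg S c : ~ derives S c -> consistent (extend S (FNeg c)).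
Proof.
  intros Hnc Hbot; apply Hnc. apply derives_deduction in Hbot.
  revert Hbot; apply derives_weaken; simpl. intros v Hv; apply NNPP; auto.
Qed.

Lemma dense_mono (P Q : world -> Prop) S :
  (forall S, consistent S -> P S -> Q S) -> dense P S -> dense Q S.
Proof. intros HPQ HP S' c e; destruct (HP S' c e) as [S'' [c' [e' H]]]; eauto. Qed.

Lemma dense_extends (P : world -> Prop) S S' : extends S S' -> dense P S -> dense P S'.
Proof. intros e HP S2 c e2; apply HP; eauto using extends_trans. Qed.

Lemma dense_here (P : world -> Prop) S :
  (forall S S', P S -> extends S S' -> P S') -> P S -> dense P S.
Proof. intros Hmono HP S' c e; exists S'; split; [|split]; eauto using extends_refl. Qed.

Lemma dense_bind (P Q : world -> Prop) S :
  dense P S ->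
  (forall S', consistent S' -> extends S S' -> P S' -> dense Q S') -> dense Q S.
Proof.
  intros HP HPQ S1 c1 e1.
  destruct (HP S1 c1 e1) as [S2 [c2 [e2 H2]]].
  destruct (HPQ S2 c2 (extends_trans e1 e2) H2 S2 c2 (extends_refl _))
    as [S3 [c3 [e3 H3]]].
  exists S3; split; [|split]; eauto using extends_trans.
Qed.

Lemma dense_idem (P : world -> Prop) S : dense (dense P) S -> dense P S.
Proof. intros H; apply (dense_bind H); auto. Qed.

Lemma dense_derives S a : consistent S -> dense (fun S => derives S a) S -> derives S a.
Proof.
  intros c Ha; apply NNPP; intros Hna.
  destruct (Ha _ (consistent_extend_neg Hna) (extends_extend S _)) as [S2 [c2 [e2 H2]]].
  apply c2. eapply derives_combine; [|exact H2|apply derives_member, e2; right; reflexivity].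
  simpl; auto.
Qed.

End Worlds.

Section Forcing.

Variable A : Type.
Variable Th : causal_theory A.
Variable R : fset A -> fset A -> Prop.

Definition qualifies (q : bfm A) (l : list (fm A * fm A)) : Prop :=
  in_theory Th l /\ R (of_list (map snd l)) (sing q).

Definition causes (l : list (fm A * fm A)) : fm A := bigand (map fst l).
Definition effects (l : list (fm A * fm A)) : fm A := bigand (map snd l).

Fixpoint force (f : bfm A) (S : world A) : Prop :=
  match f with
  | BVar a => derives S (FVar a)
  | BBot => False
  | BTop => True
  | BNeg g => forall S', consistent S' -> extends S S' -> ~ force g S'
  | BAnd g h => force g S /\ force h S
  | BOr g h => dense (fun S => force g S \/ force h S) S
  | BImp g h => forall S', consistent S' -> extends S S' -> force g S' -> force h S'
  | Box q => dense (fun S => exists l, qualifies q l /\ derives S (causes l)) S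
  end.

Lemma force_mono f S S' : extends S S' -> force f S -> force f S'.
Proof.
  revert S S'; induction f; simpl; intros S S' e H;
    eauto using derives_mono, dense_extends, extends_trans.
  destruct H; split; eauto.
Qed.

Lemma force_or_mono f g S S' :
  extends S S' -> force f S \/ force g S -> force f S' \/ force g S'.
Proof. intros e [H|H]; [left|right]; eapply force_mono; eauto. Qed.

Lemma force_dense f S : consistent S -> dense (force f) S -> force f S.
Proof.
  revert S; induction f; simpl; intros S c D.
  - apply dense_derives; auto.
  - destruct (D S c (extends_refl _)) as [? [? [? []]]].
  - auto.
  - intros S' c' e' Hf. destruct (D S' c' e') as [S2 [c2 [e2 H2]]].
    apply (H2 S2 c2 (extends_refl _)). eapply force_mono; eauto.
  - split; [apply IHf1|apply IHf2]; auto; (eapply dense_mono; [|exact D]); intros ? ? []; auto.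
  - apply dense_idem; auto.
  - intros S' c' e' Hf. apply IHf2; auto. intros S2 c2 e2.
    destruct (D S2 c2 (extends_trans e' e2)) as [S3 [c3 [e3 H3]]].
    exists S3; split; [|split]; auto. apply H3; auto using extends_refl.
    eapply force_mono; [|exact Hf]. eapply extends_trans; eauto.
  - apply dense_idem; auto.
Qed.

Lemma force_emb (a : fm A) S : consistent S -> (force (emb a) S <-> derives S a).
Proof.
  revert S; induction a; simpl; intros S c.
  - tauto.
  - split; [tauto|intros H; apply c; auto].
  - split; auto. intros _. exists []; split; [intros _ []|intros v _; simpl; auto].
  - split.
    + intros H. apply NNPP; intros Hn.
      apply (H _ (consistent_extend Hn) (extends_extend _ _)).
      apply IHa; [apply consistent_extend; auto|apply derives_member; right; auto].
    + intros H S' c' e' Hf. apply IHa in Hf; auto. apply c'.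
      eapply derives_combine; [|exact Hf|eapply derives_mono; eauto]. simpl; auto.
  - rewrite IHa1, IHa2; auto. split.
    + intros [H1 H2]; eapply derives_combine; [|exact H1|exact H2]; simpl; auto.
    + intros H; split; (eapply derives_weaken; [|exact H]); simpl; tauto.
  - split.
    + intros D. apply dense_derives; auto. eapply dense_mono; [|exact D].
      intros S' c' [H|H]; [apply IHa1 in H|apply IHa2 in H]; auto;
        (eapply derives_weaken; [|exact H]); simpl; auto.
    + intros H S' c' e'. destruct (classic (derives S' a1)) as [H1|H1].
      * exists S'; split; [|split]; auto using extends_refl. left; apply IHa1; auto.
      * exists (extend S' (FNeg a1)); split; [|split]; auto using consistent_extend_neg, extends_extend.
        right. apply IHa2; auto using consistent_extend_neg.
        apply derives_combine with (a := FOr a1 a2) (b := FNeg a1);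
          [simpl; tauto| |apply derives_member; right; auto].
        eapply derives_mono; [|exact H]. eauto using extends_trans, extends_extend.
  - split.
    + intros H. destruct (classic (derives S (FNeg a1))) as [H1|H1].
      * eapply derives_weaken; [|exact H1]. simpl; tauto.
      * apply derives_deduction. apply IHa2; auto using consistent_extend.
        apply H; auto using consistent_extend, extends_extend.
        apply IHa1; auto using consistent_extend. apply derives_member; right; auto.
    + intros H S' c' e' Hf. apply IHa1 in Hf; auto. apply IHa2; auto.
      eapply derives_combine; [|exact Hf|eapply derives_mono; eauto]. simpl; auto.
Qed.

End Forcing.

Section Soundness.

Variable A : Type.
Variable Th : causal_theory A.
Variable R : fset A -> fset A -> Prop.

Local Notation force := (force Th R).

Definition forces_all (G : fset A) (S : world A) : Prop := forall g, G g -> force g S.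
Definition forces_some (D : fset A) (S : world A) : Prop := exists d, D d /\ force d S.
Definition valid (G D : fset A) : Prop :=
  forall S, consistent S -> forces_all G S -> dense (forces_some D) S.

Lemma forces_all_mono G S S' : extends S S' -> forces_all G S -> forces_all G S'.
Proof. intros e H g Hg; eapply force_mono; eauto. Qed.

Lemma forces_some_mono D S S' : extends S S' -> forces_some D S -> forces_some D S'.
Proof. intros e [d [Hd Hf]]; exists d; split; eauto using force_mono. Qed.

Lemma forces_all_add G f S : forces_all G S -> force f S -> forces_all (add G f) S.
Proof. intros HG Hf g [Hg| ->]; auto. Qed.

Lemma forces_some_add D f S : forces_some (add D f) S -> forces_some D S \/ force f S.
Proof. intros [d [[Hd| ->] Hf]]; [left; exists d|right]; auto. Qed.

Lemma forces_some_old D f S : forces_some D S -> forces_some (add D f) S.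
Proof. intros [d [Hd Hf]]; exists d; split; [left|]; auto. Qed.

Lemma forces_some_new D f S : force f S -> forces_some (add D f) S.
Proof. intros Hf; exists f; split; [right|]; auto. Qed.

Lemma dense_forces_some D S : forces_some D S -> dense (forces_some D) S.
Proof. apply dense_here; intros; eapply forces_some_mono; eauto. Qed.

Lemma valid_ax p : valid (sing p) (sing p).
Proof. intros S c HG; apply dense_forces_some; exists p; split; [|apply HG]; reflexivity. Qed.

Lemma valid_bot : valid (sing BBot) sempty.
Proof. intros S c HG; destruct (HG BBot eq_refl). Qed.

Lemma valid_top : valid sempty (sing BTop).
Proof. intros S c HG; apply dense_forces_some; exists BTop; split; [reflexivity|exact I]. Qed.

Lemma valid_weak G D G' D' : valid G D -> subset G G' -> subset D D' -> valid G' D'.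
Proof.
  intros V sG sD S c HG. eapply dense_mono; [|apply V; auto; intros g Hg; apply HG, sG, Hg].
  intros S' _ [d [Hd Hf]]; exists d; split; auto.
Qed.

Lemma valid_negL G D f : valid G (add D f) -> valid (add G (BNeg f)) D.
Proof.
  intros V S c HG. apply (dense_bind (V S c (fun g Hg => HG g (or_introl Hg)))).
  intros S' c' e' H; destruct (forces_some_add H) as [HD|Hf].
  - apply dense_forces_some, HD.
  - destruct (HG (BNeg f) (or_intror eq_refl) S' c' e' Hf).
Qed.

Lemma valid_negR G D f : valid (add G f) D -> valid G (add D (BNeg f)).
Proof.
  intros V S c HG S' c' e'.
  destruct (classic (exists S1, consistent S1 /\ extends S' S1 /\ force f S1))
    as [[S1 [c1 [e1 Hf]]]|Hnf].
  - assert (e01 := extends_trans e' e1).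
    destruct (V S1 c1 (forces_all_add (forces_all_mono e01 HG) Hf) S1 c1 (extends_refl _))
      as [S2 [c2 [e2 HD]]].
    exists S2; split; [|split]; eauto using extends_trans, forces_some_old.
  - exists S'; split; [|split]; auto using extends_refl.
    apply forces_some_new. intros S1 c1 e1 Hf; apply Hnf; eauto.
Qed.

Lemma valid_andL G D f g : valid (add (add G f) g) D -> valid (add G (BAnd f g)) D.
Proof.
  intros V S c HG. destruct (HG (BAnd f g) (or_intror eq_refl)) as [Hf Hg].
  apply V; auto. repeat apply forces_all_add; auto. intros x Hx; apply HG; left; auto.
Qed.

Lemma valid_andR G D f g : valid G (add D f) -> valid G (add D g) -> valid G (add D (BAnd f g)).
Proof.
  intros Vf Vg S c HG. apply (dense_bind (Vf S c HG)).
  intros S1 c1 e1 H1; destruct (forces_some_add H1) as [HD|Hf].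
  - apply dense_forces_some, forces_some_old, HD.
  - apply (dense_bind (Vg S1 c1 (forces_all_mono e1 HG))).
    intros S2 c2 e2 H2; apply dense_forces_some; destruct (forces_some_add H2) as [HD|Hg].
    + apply forces_some_old, HD.
    + apply forces_some_new; split; eauto using force_mono.
Qed.

Lemma valid_orL G D f g : valid (add G f) D -> valid (add G g) D -> valid (add G (BOr f g)) D.
Proof.
  intros Vf Vg S c HG. apply (dense_bind (HG (BOr f g) (or_intror eq_refl))).
  assert (HG0 : forces_all G S) by (intros x Hx; apply HG; left; auto).
  intros S1 c1 e1 [Hf|Hg]; [apply Vf|apply Vg]; auto;
    apply forces_all_add; eauto using forces_all_mono.
Qed.

Lemma valid_orR G D f g : valid G (add (add D f) g) -> valid G (add D (BOr f g)).
Proof.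
  intros V S c HG. apply (dense_bind (V S c HG)).
  intros S1 c1 e1 H1; apply dense_forces_some.
  destruct (forces_some_add H1) as [H2|Hg]; [destruct (forces_some_add H2) as [HD|Hf]|].
  - apply forces_some_old, HD.
  - apply forces_some_new, dense_here; [intros; eapply force_or_mono; eauto|left; auto].
  - apply forces_some_new, dense_here; [intros; eapply force_or_mono; eauto|right; auto].
Qed.

Lemma valid_impL G D f g : valid G (add D f) -> valid (add G g) D -> valid (add G (BImp f g)) D.
Proof.
  intros Vf Vg S c HG.
  assert (HG0 : forces_all G S) by (intros x Hx; apply HG; left; auto).
  apply (dense_bind (Vf S c HG0)).
  intros S1 c1 e1 H1; destruct (forces_some_add H1) as [HD|Hf].
  - apply dense_forces_some, HD.
  - apply Vg; auto. apply forces_all_add; eauto using forces_all_mono.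
    apply (HG (BImp f g) (or_intror eq_refl)); auto.
Qed.

Lemma valid_impR G D f g : valid (add G f) (add D g) -> valid G (add D (BImp f g)).
Proof.
  intros V S c HG S' c' e'.
  destruct (classic (exists S1, consistent S1 /\ extends S' S1 /\ forces_some D S1))
    as [[S1 [c1 [e1 HD]]]|HnD].
  - exists S1; split; [|split]; auto using forces_some_old.
  - exists S'; split; [|split]; auto using extends_refl.
    apply forces_some_new. intros S1 c1 e1 Hf.
    apply force_dense; auto. intros S2 c2 e2.
    assert (HG1 : forces_all (add G f) S1)
      by (apply forces_all_add; eauto using forces_all_mono, extends_trans).
    destruct (V S1 c1 HG1 S2 c2 e2) as [S3 [c3 [e3 H3]]].
    exists S3; split; [|split]; auto.
    destruct (forces_some_add H3) as [HD|Hg]; auto.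
    exfalso; apply HnD; exists S3; split; [|split]; eauto using extends_trans.
Qed.

Lemma valid_boxR G D l p :
  in_theory Th l -> R (of_list (map snd l)) (sing p) ->
  valid G (add D (emb (causes l))) -> valid G (add D (Box p)).
Proof.
  intros Hth Hr V S c HG. apply (dense_bind (V S c HG)).
  intros S1 c1 e1 H1; apply dense_forces_some; destruct (forces_some_add H1) as [HD|Hl].
  - apply forces_some_old, HD.
  - apply forces_some_new, dense_here.
    + intros S2 S3 [l' [Hq Hd]] e; exists l'; eauto using derives_mono.
    + exists l; split; [split; auto|]. apply (force_emb Th R); auto.
Qed.

Lemma valid_boxL G D p :
  (forall l, in_theory Th l -> R (of_list (map snd l)) (sing p) ->
     valid (sunion G (of_list (map fst l))) D) ->
  valid (add G (Box p)) D.
Proof.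
  intros V S c HG. apply (dense_bind (HG (Box p) (or_intror eq_refl))).
  intros S1 c1 e1 [l [[Hth Hr] Hl]]. apply (V l Hth Hr S1 c1).
  intros x [Hx|[y [Hy ->]]].
  - eapply force_mono; eauto. apply HG; left; auto.
  - apply (force_emb Th R); auto. revert Hl; apply derives_weaken.
    intros v Hv; eapply eval_bigand; eauto.
Qed.

Lemma valid_cut G D G' D' p :
  valid G (add D p) -> valid (add G' p) D' -> valid (sunion G G') (sunion D D').
Proof.
  intros V V' S c HG. apply (dense_bind (V S c (fun g Hg => HG g (or_introl Hg)))).
  intros S1 c1 e1 H1; destruct (forces_some_add H1) as [[d [Hd Hf]]|Hp].
  - apply dense_forces_some; exists d; split; [left|]; auto.
  - eapply dense_mono; [|apply V'; auto].
    + intros S2 _ [d [Hd Hf]]; exists d; split; [right|]; auto.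
    + apply forces_all_add; auto. intros g Hg; eapply force_mono; eauto. apply HG; right; auto.
Qed.

Theorem soundness G D : Der Th R G D -> valid G D.
Proof.
  induction 1; eauto using valid_ax, valid_bot, valid_top, valid_weak, valid_negL,
    valid_negR, valid_andL, valid_andR, valid_orL, valid_orR, valid_impL, valid_impR,
    valid_boxR, valid_boxL, valid_cut.
Qed.

End Soundness.

Section Derivations.

Variable A : Type.
Variable Th : causal_theory A.
Variable R : fset A -> fset A -> Prop.

Lemma der_bot_left (D : fset A) : Der Th R (sing BBot) D.
Proof. eapply D_weak; [apply D_bot|intros x; auto|intros x []]. Qed.

Lemma der_bigor_left (D : fset A) xs :
  (forall x, In x xs -> Der Th R (sing (emb x)) D) -> Der Th R (sing (emb (bigor xs))) D.
Proof.
  induction xs as [|x xs IH]; intros H; simpl; [apply der_bot_left|].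
  eapply D_weak; [apply (@D_orL _ Th R sempty D)|intros y [[]|Hy]; exact Hy|intros y; auto].
  - eapply D_weak; [apply H; left; auto|intros y Hy; right; exact Hy|intros y; auto].
  - eapply D_weak; [apply IH; intros; apply H; right; auto|intros y Hy; right; exact Hy|intros y; auto].
Qed.

Lemma der_bigor_right (G : fset A) x xs :
  In x xs -> Der Th R G (sing (emb x)) -> Der Th R G (sing (emb (bigor xs))).
Proof.
  induction xs as [|y xs IH]; intros Hin H; simpl; [destruct Hin|].
  eapply D_weak; [apply (@D_orR _ Th R G sempty)|intros z; auto|intros z [[]|Hz]; exact Hz].
  destruct Hin as [<-|Hin].
  - eapply D_weak; [exact H|intros z; auto|intros z Hz; left; right; exact Hz].
  - eapply D_weak; [apply IH; auto|intros z; auto|intros z Hz; right; exact Hz].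
Qed.

Lemma der_bigand_right (G : fset A) xs :
  (forall x, In x xs -> Der Th R G (sing (emb x))) -> Der Th R G (sing (emb (bigand xs))).
Proof.
  induction xs as [|x [|y xs] IH]; intros H.
  - eapply D_weak; [apply D_top|intros z []|intros z; auto].
  - apply H; left; auto.
  - change (emb (bigand (x :: y :: xs))) with (BAnd (emb x) (emb (bigand (y :: xs)))).
    eapply D_weak; [apply (@D_andR _ Th R G sempty)|intros z; auto|intros z [[]|Hz]; exact Hz].
    + eapply D_weak; [apply H; left; auto|intros z; auto|intros z Hz; right; exact Hz].
    + eapply D_weak; [apply IH; intros; apply H; right; auto|intros z; auto|intros z Hz; right; exact Hz].
Qed.

Lemma der_bigand_left (D : fset A) xs G :
  Der Th R (sunion G (of_list xs)) D -> Der Th R (add G (emb (bigand xs))) D.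
Proof.
  revert G; induction xs as [|x [|y xs] IH]; intros G H.
  - eapply D_weak; [exact H| |intros z; auto]. intros z [Hz|[f [[] _]]]; left; auto.
  - eapply D_weak; [exact H| |intros z; auto].
    intros z [Hz|[f [[<-|[]] ->]]]; [left|right]; auto.
  - change (emb (bigand (x :: y :: xs))) with (BAnd (emb x) (emb (bigand (y :: xs)))).
    apply D_andL, IH. eapply D_weak; [exact H| |intros z; auto].
    intros z [Hz|[f [[<-|Hf] ->]]]; [left; left| left; right| right; exists f]; auto.
Qed.

End Derivations.

Section Interpolation.

Variable A : Type.
Variable Th : causal_theory A.
Variable R : fset A -> fset A -> Prop.

Lemma force_of_der (Gamma : fm A -> Prop) q :
  consistent Gamma -> Der Th R (emb_set Gamma) (sing q) -> force Th R q Gamma.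
Proof.
  intros c HD. apply force_dense; auto.
  eapply dense_mono; [|apply (soundness HD); auto].
  - intros S _ [d [Hd Hf]]; rewrite <- Hd; exact Hf.
  - intros g [f [Hf ->]]. apply force_emb; auto. apply derives_member; auto.
Qed.

(* If a consistent theory forces Box p, it finitely derives the disjunction of
   the causes of finitely many rule sets qualifying for p: otherwise adding the
   negations of all such causes would give a consistent world from which no
   qualifying rule set is reachable. *)
Lemma cover_of_forced_box (Gamma : fm A -> Prop) p :
  consistent Gamma -> force Th R (Box p) Gamma ->
  exists ls, (forall l, In l ls -> qualifies Th R p l) /\
    derives Gamma (bigor (map (causes (A:=A)) ls)).
Proof.
  intros c Hbox. apply NNPP; intros Hno.
  set (S := fun x => Gamma x \/ exists l, qualifies Th R p l /\ x = FNeg (causes l)).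
  assert (cS : consistent S).
  { intros [L [HL Hbot]].
    destruct (list_in_union Gamma (qualifies Th R p) (fun l => FNeg (causes l)) L HL)
      as [L0 [ls [HL0 [Hls Hsplit]]]].
    apply Hno; exists ls; split; auto. exists L0; split; auto.
    intros v Hv. apply NNPP; intros Hn. apply (Hbot v). intros x Hx.
    destruct (Hsplit x Hx) as [H|[l [Hl ->]]]; [apply Hv; auto|].
    intros Hl'; apply Hn. eapply eval_bigor; [|exact Hl']. apply in_map; auto. }
  destruct (Hbox S cS (fun x Hx => or_introl Hx)) as [S2 [c2 [e2 [l [Hq Hl]]]]].
  apply c2. eapply derives_combine; [|exact Hl|apply derives_member, e2; right; exists l; eauto].
  simpl; auto.
Qed.

Lemma der_box_of_cover p ls :
  (forall G D, Der Th R G D -> R G D) ->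
  (forall l, In l ls -> qualifies Th R p l) ->
  Der Th R (sing (emb (bigor (map (causes (A:=A)) ls))))
           (sing (Box (emb (bigor (map (effects (A:=A)) ls))))).
Proof.
  intros HR Hq. apply der_bigor_left. intros x Hx. apply in_map_iff in Hx as [l [<- Hl]].
  destruct (Hq l Hl) as [Hth _].
  eapply D_weak; [apply (@D_boxR _ Th R (sing (emb (causes l))) sempty l)
                 |intros z; auto|intros z [[]|Hz]; exact Hz].
  - exact Hth.
  - apply HR, der_bigor_right with (x := effects l); [apply in_map; auto|].
    apply der_bigand_right. intros x Hx.
    eapply D_weak; [apply (D_ax Th R (emb x))|intros z Hz; exists x; split; auto|intros z; auto].
  - eapply D_weak; [apply (D_ax Th R (emb (causes l)))|intros z; auto|intros z Hz; right; exact Hz].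
Qed.

Lemma der_effects_of_cover p ls :
  (forall G D, R G D -> Der Th R G D) ->
  (forall l, In l ls -> qualifies Th R p l) ->
  Der Th R (sing (emb (bigor (map (effects (A:=A)) ls)))) (sing p).
Proof.
  intros HR Hq. apply der_bigor_left. intros x Hx. apply in_map_iff in Hx as [l [<- Hl]].
  destruct (Hq l Hl) as [_ Hr].
  eapply D_weak; [apply (der_bigand_left (D := sing p) (xs := map snd l) (G := sempty))
                 |intros z [[]|Hz]; exact Hz|intros z; auto].
  eapply D_weak; [apply HR, Hr|intros z Hz; right; exact Hz|intros z; auto].
Qed.

End Interpolation.

Theorem mainTheorem17 (A : Type) (Th : causal_theory A)
  (R : fset A -> fset A -> Prop) (HR : S_fixpoint Th R)
  (Gamma : fm A -> Prop) (p : bfm A) :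
  Der Th R (emb_set Gamma) (sing (Box p)) ->
  exists (Gamma' : list (fm A)) (a b : fm A),
    (forall g, In g Gamma' -> Gamma g) /\
    cl_conseq Gamma' a /\
    Der Th R (sing (emb a)) (sing (Box (emb b))) /\
    Der Th R (sing (emb b)) (sing p).
Proof.
  intros HD. destruct (classic (consistent Gamma)) as [c|Hinc].
  - destruct (cover_of_forced_box c (force_of_der c HD)) as [ls [Hq [L [HL HC]]]].
    exists L, (bigor (map (causes (A:=A)) ls)), (bigor (map (effects (A:=A)) ls)).
    repeat split; auto.
    + apply der_box_of_cover with (p := p); auto. intros G D; apply HR.
    + apply der_effects_of_cover; auto. intros G D; apply HR.
  - apply NNPP in Hinc as [L [HL HC]].
    exists L, FBot, FBot. repeat split; auto; apply der_bot_left.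
Qed.
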